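(* Let $0\le\ell\le n$ and $\mu\in P^+_{\ell,n}$. For $1\le r\le n-1$ let $A_r,D_r$ be the components of $A,D$ of total degree $r$ in $\omega_2,\omega_4,\omega_6$. Then \[ A_rv_\mu=\sum_{\substack{\lambda\in P^+_{\ell,n}\\ \lambda/\mu=b,\ |b|=r}}\Omega(b)\,v_\lambda,\qquad D_rv_\mu=\sum_{\substack{\lambda\in P^+_{\ell,n}\\ \mu/\lambda=b,\ |b|=n-r}}\overline{\Omega}(b)\,v_\lambda, \] where the sums run over $\lambda\in P^+_{\ell,n}$ such that $\lambda/\mu$ (resp. $\mu/\lambda$) is a broken rim hook $b$ of length $r$ (resp. $n-r$). The first formula also holds for $A_0$ and the second for $D_n$, where the empty skew diagram ($\lambda=\mu$) is admitted as a broken rim hook.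
   Context: Let $V=\mathbb{C}v_0\oplus\mathbb{C}v_1$, $e_{ab}$ the matrix units ($e_{ab}v_c=\delta_{bc}v_a$). For indeterminates $\omega=(\omega_1,\dots,\omega_6)$ let $R(\omega)=e_{00}\otimes(\omega_1e_{00}+\omega_3e_{11})+e_{01}\otimes\omega_5e_{10}+e_{10}\otimes\omega_6e_{01}+e_{11}\otimes(\omega_4e_{00}+\omega_2e_{11})\in\operatorname{End}(V\otimes V)\otimes\mathbb{C}[\omega]$. On $V_0\otimes V^{\otimes n}$ ($V_0$ an auxiliary copy of $V$) let $T(\omega)=R_{0n}(\omega)\cdots R_{01}(\omega)$ and write $T=e_{00}\otimes A+e_{01}\otimes B+e_{10}\otimes C+e_{11}\otimes D$. For a binary string $\sigma\in\{0,1\}^n$ with 1's exactly at positions $i_1<\dots<i_\ell$, $v_\sigma=v_{\sigma_1}\otimes\cdots\otimes v_{\sigma_n}$ is labelled $v_\lambda$ with $\lambda=(i_\ell-\ell,i_{\ell-1}-(\ell-1),\dots,i_1-1)\in P^+_{\ell,n}$, the partitions with at most $\ell$ parts, all $\le n-\ell$. A broken rim hook is a skew diagram $b=\lambda/\mu$ ($\mu\subset\lambda$) containing no $2\times2$ block of boxes; its edge-connected components are (connected) rim hooks $h$, $\#b$ is their number, $|b|$ the number of boxes, $r(h)$, $c(h)$ the numbers of rows and columns $h$ occupies. For $\lambda,\mu\in P^+_{\ell,n}$, $\bar r(b)$ is the number of rows $1\le i\le\ell$ containing no box of $b$ and $\bar c(b)$ the number of columns $1\le j\le n-\ell$ containing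 no box of $b$. Set $\Omega(b)=\Omega(b;\omega)=\omega_1^{\bar c(b)}\omega_3^{\bar r(b)}(\omega_5\omega_6)^{\#b}\prod_{h\in b}\omega_2^{r(h)-1}\omega_4^{c(h)-1}$ and $\overline{\Omega}(b;\omega_1,\dots,\omega_6)=\Omega(b;\omega_4,\omega_3,\omega_2,\omega_1,\omega_6,\omega_5)$. *)

From mathcomp Require Import all_boot all_algebra mpoly.
Set Implicit Arguments.
Unset Strict Implicit.
Unset Printing Implicit Defensive.
Import GRing.Theory.
Local Open Scope ring_scope.

(* Coefficient ring C[omega] = {mpoly R[6]}; omega_j is 'X_(j-1). *)
Definition omega (R : numClosedFieldType) (j : nat) : {mpoly R[6]} :=
  'X_(inord j.-1).

(* Binary strings of length n (v_0 <-> false, v_1 <-> true). *)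
Definition bstring (n : nat) := {ffun 'I_n -> bool}.

(* Entry <a c | R(omega) | b d>, first tensor factor = auxiliary space.   *)
(* R = e00(x)(w1 e00 + w3 e11) + e01(x)w5 e10 + e10(x)w6 e01             *)
(*     + e11(x)(w4 e00 + w2 e11),  e_{ab} v_c = delta_{bc} v_a.           *)
Definition Rentry (R : numClosedFieldType) (a c b d : bool) : {mpoly R[6]} :=
  match a, c, b, d with
  | false, false, false, false => omega R 1
  | false, true,  false, true  => omega R 3
  | false, true,  true,  false => omega R 5
  | true,  false, false, true  => omega R 6
  | true,  false, true,  false => omega R 4
  | true,  true,  true,  true  => omega R 2
  | _, _, _, _ => 0
  end.

(* Operators on V_0 (x) V^{(x)n}, as matrices indexed by the finite basis *)
(* (aux bit, string); M x y = coefficient of basis vector x in M(e_y).    *)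
Definition auxop (R : numClosedFieldType) (n : nat) :=
  (bool * bstring n)%type -> (bool * bstring n)%type -> {mpoly R[6]}.

Definition auxmul (R : numClosedFieldType) (n : nat) (M N : auxop R n)
  : auxop R n := fun x y => \sum_(z : bool * bstring n) M x z * N z y.

Definition auxid (R : numClosedFieldType) (n : nat) : auxop R n :=
  fun x y => (x == y)%:R.

Definition R0 (R : numClosedFieldType) (n : nat) (i : 'I_n) : auxop R n :=
  fun x y => Rentry R x.1 (x.2 i) y.1 (y.2 i) *
             ([forall j : 'I_n, (j != i) ==> (x.2 j == y.2 j)])%:R.

(* Monodromy T = R_{0n} ... R_{01} (R_{01} applied first). *)
Definition Tmon (R : numClosedFieldType) (n : nat) : auxop R n :=
  foldl (fun acc i => auxmul (R0 R i) acc) (@auxid R n) (enum 'I_n).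

(* T = e00 (x) A + e01 (x) B + e10 (x) C + e11 (x) D. *)
Definition Aop (R : numClosedFieldType) (n : nat) (s t : bstring n)
  : {mpoly R[6]} := @Tmon R n (false, s) (false, t).
Definition Dop (R : numClosedFieldType) (n : nat) (s t : bstring n)
  : {mpoly R[6]} := @Tmon R n (true, s) (true, t).

(* Component of total degree r in omega_2, omega_4, omega_6              *)
(* (i.e. in the variables 'X_1, 'X_3, 'X_5).                              *)
Definition deg246 (m : 'X_{1..6}) : nat := (\sum_(i < 6 | odd i) m i)%N.
Definition comp246 (R : numClosedFieldType) (r : nat) (p : {mpoly R[6]})
  : {mpoly R[6]} :=
  \sum_(m <- msupp p | deg246 m == r) p@_m *: 'X_[m].

Definition opapply (R : numClosedFieldType) (n : nat)
  (M : bstring n -> bstring n -> {mpoly R[6]}) (v : {ffun bstring n -> {mpoly R[6]}})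
  : {ffun bstring n -> {mpoly R[6]}} :=
  [ffun s => \sum_(t : bstring n) M s t * v t].

(* Label of a binary string: ones at positions i_1 < ... < i_l (1-based), *)
(* lambda = (i_l - l, i_{l-1} - (l-1), ..., i_1 - 1) as a seq of size l.  *)
Definition ones (n : nat) (s : bstring n) : seq nat :=
  [seq (val i).+1 | i <- enum 'I_n & s i].
Definition label (n : nat) (s : bstring n) : seq nat :=
  let p := ones s in let l := size p in
  [seq (nth 0 p (l - k) - (l - k).+1)%N | k <- iota 1 l].

(* P^+_{l,n}: partitions with (at most) l parts (padded with zeros to    *)
(* length exactly l), all parts <= n - l, written as nonincreasing seqs.  *)
Definition Pplus (l n : nat) : seq (seq nat) :=
  [seq lam <- [seq [seq val i | i <- tval t] | t <- enum {: l.-tuple 'I_(n - l).+1}]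
     | sorted geq lam].

(* The basis vector v_lambda (= v_sigma for the string sigma labelled lambda). *)
Definition vlab (R : numClosedFieldType) (n : nat) (lam : seq nat)
  : {ffun bstring n -> {mpoly R[6]}} := [ffun s => (label s == lam)%:R].

(* Skew diagrams lam/mu, boxes (i,j) 0-indexed, i < l (rows), j < n - l. *)

Definition subpart (mu lam : seq nat) : bool :=
  all (fun k => nth 0 mu k <= nth 0 lam k)%N (iota 0 (size lam)).

Definition skewd (l n : nat) (lam mu : seq nat) : {set 'I_l * 'I_(n - l)} :=
  [set x : 'I_l * 'I_(n - l) | (nth 0 mu x.1 <= x.2 < nth 0 lam x.1)%N].

Definition broken_rim_hook (l n : nat) (b : {set 'I_l * 'I_(n - l)}) : bool :=
  ~~ [exists x : 'I_l * 'I_(n - l), exists y : 'I_l * 'I_(n - l),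
        [&& val y.1 == (val x.1).+1, val y.2 == (val x.2).+1,
            x \in b, y \in b, (x.1, y.2) \in b & (y.1, x.2) \in b]].

Definition badj (l n : nat) (b : {set 'I_l * 'I_(n - l)})
  : rel ('I_l * 'I_(n - l)) :=
  fun x y => [&& x \in b, y \in b &
    ((val x.1 == val y.1) && ((val x.2 == (val y.2).+1) || (val y.2 == (val x.2).+1)))
    || ((val x.2 == val y.2) && ((val x.1 == (val y.1).+1) || (val y.1 == (val x.1).+1)))].

Definition components (l n : nat) (b : {set 'I_l * 'I_(n - l)})
  : {set {set 'I_l * 'I_(n - l)}} :=
  [set [set y in b | connect (badj b) x y] | x in b].

Definition nrows (l n : nat) (h : {set 'I_l * 'I_(n - l)}) : nat :=
  #|[set x.1 | x in h]|.
Definition ncols (l n : nat) (h : {set 'I_l * 'I_(n - l)}) : nat :=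
  #|[set x.2 | x in h]|.

Definition rbar (l n : nat) (b : {set 'I_l * 'I_(n - l)}) : nat :=
  #|[set i : 'I_l | [forall x in b, x.1 != i]]|.
Definition cbar (l n : nat) (b : {set 'I_l * 'I_(n - l)}) : nat :=
  #|[set j : 'I_(n - l) | [forall x in b, x.2 != j]]|.

Definition OmegaGen (R : numClosedFieldType) (w1 w2 w3 w4 w5 w6 : {mpoly R[6]})
  (l n : nat) (b : {set 'I_l * 'I_(n - l)}) : {mpoly R[6]} :=
  w1 ^+ cbar b * w3 ^+ rbar b * (w5 * w6) ^+ #|components b| *
  \prod_(h in components b) (w2 ^+ (nrows h).-1 * w4 ^+ (ncols h).-1).

Definition Omega (R : numClosedFieldType) (l n : nat) (b : {set 'I_l * 'I_(n - l)}) :=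
  OmegaGen (omega R 1) (omega R 2) (omega R 3) (omega R 4) (omega R 5) (omega R 6) b.

Definition Omegabar (R : numClosedFieldType) (l n : nat) (b : {set 'I_l * 'I_(n - l)}) :=
  OmegaGen (omega R 4) (omega R 3) (omega R 2) (omega R 1) (omega R 6) (omega R 5) b.

Definition is_brh (l n : nat) (lam mu : seq nat) (r : nat) : bool :=
  [&& subpart mu lam, broken_rim_hook (skewd l n lam mu) & #|skewd l n lam mu| == r].

From mathcomp Require Import all_boot all_algebra mpoly.
From mathcomp Require Import zify ring.
Set Implicit Arguments.
Unset Strict Implicit.
Unset Printing Implicit Defensive.
Import GRing.Theory.

(* The monodromy is the transfer matrix of the six-vertex weight [R], which conserves the
   number of 1's.  An entry of [T] between strings [s] (output) and [t] (input) is a sum over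
   sequences of auxiliary states, and conservation forces the state after [i] sites to be
   [b + #(1's of t before i) - #(1's of s before i)].  So every entry of [A] or [D] is 0 or a
   single monomial, the product of the weights of the sites; it is nonzero iff the prefix counts
   of [s] and [t] interlace.  In terms of labels, interlacing says that one label contains the
   other and that the skew diagram between them has no 2x2 block: it is a broken rim hook.
   The boxes of that diagram correspond to the sites where the auxiliary state is 1 (weights
   omega_2, omega_4, omega_6, whence the degree), its components to maximal runs of such
   sites, and its empty rows and columns to the 1's and 0's passing straight through (weights
   omega_3 and omega_1).  Counting sites by weight then gives the exponents of Omega. *)

(** * Prefix counts and labels *)

Section PrefixCount.
Variable f : nat -> bool.

Definition pcount (m : nat) : nat := \sum_(i < m) f i.

Lemma pcount0 : pcount 0 = 0.
Proof. by rewrite /pcount big_ord0. Qed.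

Lemma pcountS m : pcount m.+1 = pcount m + f m.
Proof. by rewrite /pcount big_ord_recr. Qed.

Lemma pcountS_le m : pcount m <= pcount m.+1 <= (pcount m).+1.
Proof. by rewrite pcountS; case: (f m) => /=; lia. Qed.

Lemma pcount_le m : pcount m <= m.
Proof. by elim: m => [|m IH]; rewrite ?pcount0 // pcountS; case: (f m) => /=; lia. Qed.

Lemma leq_pcount m m' : m <= m' -> pcount m <= pcount m'.
Proof.
move=> h; rewrite -(subnKC h); elim: (m' - m) => [|k IH]; first by rewrite addn0.
by rewrite addnS pcountS; lia.
Qed.

Lemma pcount_leqD m m' : m <= m' -> pcount m' <= pcount m + (m' - m).
Proof.
move=> h; rewrite -(subnKC h); elim: (m' - m) => [|k IH]; first by rewrite addn0 subnn addn0.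
by rewrite addnS pcountS; case: (f (m + k)) => /=; lia.
Qed.

Lemma leq_sub_pcount m m' : m <= m' -> m - pcount m <= m' - pcount m'.
Proof. by move=> h; have := pcount_leqD h; have := pcount_le m; lia. Qed.

Lemma pcount_stable N m : (forall i, N <= i -> f i = false) -> N <= m ->
  pcount m = pcount N.
Proof.
move=> hf h; rewrite -(subnKC h); elim: (m - N) => [|d IH]; first by rewrite addn0.
by rewrite addnS pcountS IH hf ?addn0 //; lia.
Qed.

Lemma sum_pcount_rank (Q : nat -> bool) m :
  \sum_(i < m) (f i && Q (pcount i) : nat) = \sum_(j < pcount m) Q j.
Proof.
elim: m => [|m IH]; first by rewrite big_ord0 pcount0 big_ord0.
rewrite big_ord_recr /= IH pcountS; case: (f m) => /=; last by rewrite !addn0.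
by rewrite addn1 big_ord_recr.
Qed.

Lemma size_filter_iota m : size (filter f (iota 0 m)) = pcount m.
Proof.
elim: m => [|m IH]; first by rewrite pcount0.
by rewrite -addn1 iotaD filter_cat size_cat IH /= addn1 pcountS; case: (f m).
Qed.

Lemma nth_filter_iota m j : j < pcount m ->
  let q := nth 0 (filter f (iota 0 m)) j in [/\ f q, pcount q = j & q < m].
Proof.
elim: m j => [|m IH] j; first by rewrite pcount0.
rewrite -[m.+1]addn1 iotaD filter_cat nth_cat size_filter_iota add0n addn1 pcountS => hj.
case: ltnP => h; first by have [h1 h2 h3] := IH j h; split => //; lia.
case hf: (f m) hj => /= hj; last by lia.
have -> : j - pcount m = 0 by lia.
by rewrite hf /=; split => //; lia.
Qed.

End PrefixCount.

Lemma pcountN (f : nat -> bool) m : pcount (fun i => ~~ f i) m = m - pcount f m.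
Proof.
elim: m => [|m IH]; first by rewrite !pcount0.
by rewrite !pcountS IH; have := pcount_le f m; case: (f m) => /=; lia.
Qed.

Lemma ascents_descents (a : nat -> bool) m :
  \sum_(i < m) (~~ a i && a i.+1 : nat) + a 0 =
  \sum_(i < m) (a i && ~~ a i.+1 : nat) + a m.
Proof.
elim: m => [|m IH]; first by rewrite !big_ord0.
by rewrite !big_ord_recr /=; move: IH; case: (a m); case: (a m.+1) => /=; lia.
Qed.

Lemma sum_ord_lt L v : \sum_(j < L) (j < v : nat) = minn v L.
Proof.
elim: L => [|L IH]; first by rewrite big_ord0 minn0.
by rewrite big_ord_recr /= IH; case: ltnP => h; lia.
Qed.

Lemma sum_ord_ge L a : \sum_(j < L) (a <= j : nat) = L - a.
Proof.
elim: L => [|L IH]; first by rewrite big_ord0.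
by rewrite big_ord_recr /= IH; case: leqP => h; lia.
Qed.

Section Labels.
Variable n : nat.
Implicit Types x s t : bstring n.

Definition bit x (i : nat) : bool := [exists j : 'I_n, (nat_of_ord j == i) && x j].

Lemma bitE x (j : 'I_n) : bit x j = x j.
Proof.
apply/existsP/idP => [[j' /andP[/eqP h hx]]|hx]; last by exists j; rewrite eqxx.
by have <- : j' = j by apply: val_inj.
Qed.

Lemma bit_out x i : n <= i -> bit x i = false.
Proof.
move=> h; apply/existsP => [[j /andP[/eqP hj _]]].
by move: (ltn_ord j); rewrite hj ltnNge h.
Qed.

Lemma pcount_stable_bit x m : n <= m -> pcount (bit x) m = pcount (bit x) n.
Proof. by apply: pcount_stable => i; apply: bit_out. Qed.

Lemma ones_filter x : ones x = map S (filter (bit x) (iota 0 n)).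
Proof.
rewrite /ones -val_enum_ord filter_map -map_comp; congr map.
by apply: eq_filter => i; rewrite /preim /= bitE.
Qed.

Lemma size_label x : size (label x) = pcount (bit x) n.
Proof. by rewrite /label size_map size_iota ones_filter size_map size_filter_iota. Qed.

(* Part [k] comes from the 1 of rank [j = pcount (bit x) n - 1 - k] (ranks from 0), which sits
   at site [j + part]; so the part is at most [c] iff more than [j] 1's lie before site
   [j + c + 1]. *)
Lemma label_le x k c : k < pcount (bit x) n ->
  (nth 0 (label x) k <= c) =
  (pcount (bit x) n - 1 - k < pcount (bit x) (pcount (bit x) n - 1 - k + c + 1)).
Proof.
move=> hk; set L := pcount (bit x) n in hk *; set j := L - 1 - k.
have hj : j < L by rewrite /j; lia.
have [h1 h2 h3] := nth_filter_iota hj.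
set q := nth 0 _ j in h1 h2 h3.
have -> : nth 0 (label x) k = q - j.
  rewrite /label (nth_map 0) ?size_iota ?ones_filter ?size_map ?size_filter_iota //.
  rewrite nth_iota ?(nth_map 0) ?size_filter_iota -/L; try lia.
  by have -> : L - (1 + k) = j by rewrite /j; lia.
have hqj : j <= q by rewrite -{1}h2 pcount_le.
apply/idP/idP => h.
  have : pcount (bit x) q.+1 <= pcount (bit x) (j + c + 1) by apply: leq_pcount; lia.
  by rewrite pcountS h1 h2; lia.
apply/negPn/negP => hn.
have : pcount (bit x) (j + c + 1) <= pcount (bit x) q by apply: leq_pcount; lia.
lia.
Qed.

Lemma pcount_label x m :
  pcount (bit x) m = \sum_(j < size (label x))
     ((j < m) && (nth 0 (label x) (size (label x) - 1 - j) <= m - 1 - j) : nat).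
Proof.
have hsat : minn (pcount (bit x) m) (pcount (bit x) n) = pcount (bit x) m.
  case: (leqP m n) => h; first by have := leq_pcount (bit x) h; lia.
  by rewrite pcount_stable_bit; lia.
rewrite -[LHS]hsat -sum_ord_lt size_label; apply: eq_bigr => [[j hj]] _ /=.
rewrite label_le; last by lia.
have -> : pcount (bit x) n - 1 - (pcount (bit x) n - 1 - j) = j by lia.
case: (ltnP j m) => hjm /=; first by have -> : j + (m - 1 - j) + 1 = m by lia.
by case: ltnP => // hh; have := pcount_le (bit x) m; lia.
Qed.

Lemma label_inj : injective (@label n).
Proof.
move=> x y h.
have hc m : pcount (bit x) m = pcount (bit y) m by rewrite !pcount_label h.
apply/ffunP => i; have := hc (nat_of_ord i).+1; rewrite !pcountS hc !bitE.
by case: (x i); case: (y i) => /=; lia.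
Qed.

Lemma mem_Pplus l (lam : seq nat) : (lam \in Pplus l n) =
  [&& size lam == l, sorted geq lam & all (fun v => v <= n - l) lam].
Proof.
rewrite /Pplus mem_filter andbCA; congr andb.
apply/mapP/idP.
  move=> [tp _ ->]; rewrite size_map size_tuple eqxx /=.
  by apply/allP => v /mapP [i _ ->]; rewrite -ltnS ltn_ord.
move=> /andP [/eqP hs /allP ha].
have hs' : size (map (fun v => inord v : 'I_(n - l).+1) lam) == l by rewrite size_map hs.
exists (Tuple hs'); first by rewrite mem_enum.
rewrite /= -map_comp map_id_in // => v hv /=.
by rewrite inordK // ltnS; apply: ha.
Qed.

Lemma uniq_Pplus l : uniq (Pplus l n).
Proof.
apply: filter_uniq; rewrite map_inj_uniq ?enum_uniq //.
by move=> t1 t2 /= /(inj_map val_inj) h; apply: val_inj.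
Qed.

Lemma label_sorted x : sorted geq (label x).
Proof.
apply/(sortedP 0) => k; rewrite size_label => hk; rewrite /geq /=.
set L := pcount (bit x) n in hk; set c := nth 0 (label x) k.
have h2 := @label_le x k c (ltnW hk); rewrite leqnn -/L in h2.
rewrite label_le // -/L; set j := L - 1 - k.+1.
rewrite (_ : L - 1 - k = j.+1) in h2; last by lia.
rewrite (_ : j.+1 + c + 1 = (j + c + 1).+1) in h2; last by lia.
by move: h2; rewrite pcountS; case: (bit x _) => /=; lia.
Qed.

Lemma label_bounded l x : l <= n -> pcount (bit x) n = l ->
  all (fun v => v <= n - l) (label x).
Proof.
move=> hl hc; apply/(all_nthP 0) => k; rewrite size_label hc => hk.
rewrite label_le ?hc //.
have := pcount_leqD (bit x) (_ : l - 1 - k + (n - l) + 1 <= n).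
by rewrite hc; lia.
Qed.

Lemma label_Pplus l x : l <= n -> (label x \in Pplus l n) = (pcount (bit x) n == l).
Proof.
move=> hl; rewrite mem_Pplus size_label label_sorted /=.
by case: eqP => //= h; apply: label_bounded.
Qed.

Section Decreasing.
Variables (l : nat) (g : nat -> nat).
Hypothesis g_decr : forall k1 k2, k1 < k2 < l -> g k2 < g k1.

Lemma sum_decreasing_lt v k : k < l ->
  (l - 1 - k < \sum_(k' < l) (g k' < v : nat)) = (g k < v).
Proof.
move=> hk.
have hge k' : k' < l -> k' <= k -> g k <= g k'.
  move=> hk' hkk; case: (ltnP k' k) => h; first by apply/ltnW/g_decr; rewrite h hk.
  by have -> : k' = k by lia.
have hle k' : k' < l -> k <= k' -> g k' <= g k.
  move=> hk' hkk; case: (ltnP k k') => h; first by apply/ltnW/g_decr; rewrite h hk'.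
  by have -> : k' = k by lia.
apply/idP/idP => h.
  apply/negPn/negP; rewrite -leqNgt => hv.
  have : \sum_(k' < l) (g k' < v : nat) <= \sum_(k' < l) (k.+1 <= k' : nat).
    apply: leq_sum => [[k' hk']] _ /=.
    case: (ltnP k k') => hkk; first by case: (g k' < v).
    by rewrite ltnNge (leq_trans hv (hge _ hk' hkk)).
  by rewrite sum_ord_ge; lia.
have : \sum_(k' < l) (k <= k' : nat) <= \sum_(k' < l) (g k' < v : nat).
  apply: leq_sum => [[k' hk']] _ /=.
  by case: (leqP k k') => hkk //=; rewrite (leq_ltn_trans (hle _ hk' hkk) h).
by rewrite sum_ord_ge; lia.
Qed.

Hypothesis g_lt : forall k, k < l -> g k < n.

Definition ones_at : bstring n := [ffun i : 'I_n => [exists k : 'I_l, nat_of_ord i == g k]].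

Lemma pcount_ones_at m : pcount (bit ones_at) m = \sum_(k < l) (g k < m : nat).
Proof.
elim: m => [|m IH]; first by rewrite pcount0 big1.
have g_inj (k k0 : 'I_l) : g k = g k0 -> k = k0.
  move=> he; apply: val_inj; case: (ltngtP k k0) => // hc.
    by have := @g_decr k k0; rewrite hc ltn_ord; lia.
  by have := @g_decr k0 k; rewrite hc ltn_ord; lia.
have -> : \sum_(k < l) (g k < m.+1 : nat) =
           \sum_(k < l) (g k < m : nat) + \sum_(k < l) (g k == m : nat).
  rewrite -big_split; apply: eq_bigr => k _ /=.
  by rewrite ltnS leq_eqVlt; case: eqP; case: ltnP => //=; lia.
rewrite pcountS IH; congr addn.
case hb: (bit ones_at m).
  move: hb => /existsP [i /andP [/eqP hi]]; rewrite ffunE => /existsP [k0 /eqP hk0].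
  rewrite (bigD1 k0) //= -hk0 hi eqxx big1 // => k hk.
  by case: eqP => // he; case/eqP: hk; apply: g_inj; rewrite he -hi hk0.
rewrite big1 // => k _; case: eqP => // he; exfalso.
have hmn : m < n by rewrite -he; apply: g_lt.
move: hb; rewrite -[m]/(nat_of_ord (Ordinal hmn)) bitE ffunE => /existsP; apply.
by exists k; rewrite /= he.
Qed.

End Decreasing.

(* The string whose 1's sit at the positions [mu_k + (l - 1 - k)] (0-based). *)
Lemma label_surj l mu : l <= n -> mu \in Pplus l n -> exists t : bstring n, label t = mu.
Proof.
move=> hl; rewrite mem_Pplus => /and3P [/eqP hs hsort /allP hall].
pose g k := nth 0 mu k + (l - 1 - k).
have g_decr k1 k2 : k1 < k2 < l -> g k2 < g k1.
  move=> /andP [h12 h2l].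
  have geq_tr : transitive geq by move=> b a c h1 h2; exact: leq_trans h2 h1.
  have := sorted_leq_nth geq_tr leqnn 0 hsort; rewrite hs => /(_ k1 k2).
  by rewrite !inE => /(_ (ltn_trans h12 h2l) h2l (ltnW h12)); rewrite /geq /g; lia.
have g_lt k : k < l -> g k < n.
  move=> hk; have : nth 0 mu k <= n - l by apply: hall; rewrite mem_nth // hs.
  by rewrite /g; lia.
have hcnt := pcount_ones_at g_decr g_lt; set t := ones_at _ _ in hcnt *.
have hsz : size (label t) = l.
  rewrite size_label hcnt (eq_bigr (fun _ => 1)) ?sum1_card ?card_ord // => k _.
  by rewrite g_lt.
exists t; apply: (@eq_from_nth _ 0); first by rewrite hsz hs.
move=> k; rewrite hsz => hk.
have le_nth c : (nth 0 (label t) k <= c) = (nth 0 mu k <= c).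
  rewrite label_le -?size_label ?hsz // hcnt sum_decreasing_lt // /g; lia.
by apply/eqP; rewrite eqn_leq le_nth leqnn -le_nth leqnn.
Qed.

End Labels.

(** * The monodromy as a transfer matrix *)

Section Monodromy.
Variables (R : numClosedFieldType) (n : nat).
Local Open Scope ring_scope.
Implicit Types (s t u w : bstring n) (a b c : bool).

Definition bset u (i : 'I_n) c : bstring n := [ffun j => if j == i then c else u j].

Lemma R0_mulr_sum (i : 'I_n) a u a' (F : bstring n -> {mpoly R[6]}) :
  \sum_w R0 R i (a, u) (a', w) * F w = \sum_c Rentry R a (u i) a' c * F (bset u i c).
Proof.
rewrite (partition_big (fun w => w i) xpredT) //=; apply: eq_bigr => c _.
rewrite (bigD1 (bset u i c)) /=; last by rewrite ffunE eqxx.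
rewrite big1 ?addr0.
  rewrite /R0 /= ffunE eqxx (_ : [forall j, _] = true) ?mulr1 //.
  by apply/forallP => j; rewrite ffunE; case: (j =P i) => [->|_]; rewrite ?eqxx ?implybT.
move=> w /andP [/eqP wi neq_w]; rewrite /R0 /=.
case: forallP => [same|]; last by rewrite mulr0 mul0r.
case/eqP: neq_w; apply/ffunP => j; rewrite ffunE.
case: (j =P i) => [->|/eqP ji]; first by rewrite wi.
by apply/esym/eqP/(implyP (same j)).
Qed.

Lemma bit_bset u i c j : bit (bset u i c) j = if j == nat_of_ord i then c else bit u j.
Proof.
case: (ltnP j n) => [lt_jn|le_nj]; last by rewrite !bit_out // gtn_eqF // (leq_trans _ le_nj).
by rewrite -[j]/(nat_of_ord (Ordinal lt_jn)) !bitE ffunE -val_eqE.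
Qed.

Fixpoint Tprefix s t b k a : {mpoly R[6]} :=
  if k is k'.+1 then \sum_a' Rentry R a (bit s k') a' (bit t k') * Tprefix s t b k' a'
  else (a == b)%:R.

Lemma eq_Tprefix s s' t b k a : (forall i, (i < k)%N -> bit s i = bit s' i) ->
  Tprefix s t b k a = Tprefix s' t b k a.
Proof.
elim: k a => [|k IH] a h //=.
by apply: eq_bigr => a' _; rewrite h // IH // => i hi; apply: h; lia.
Qed.

Lemma Tmon_take k a u b t : (k <= n)%N ->
  foldl (fun acc i => auxmul (R0 R i) acc) (@auxid R n) (take k (enum 'I_n)) (a, u) (b, t) =
  [forall j : 'I_n, (k <= j)%N ==> (u j == t j)]%:R * Tprefix u t b k a.
Proof.
elim: k a u => [|k IH] a u hk.
  rewrite take0 /= /auxid -pair_eqE /= -mulnb natrM mulrC; congr (_ * _%:R).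
  congr (nat_of_bool _)%:R; apply/idP/idP => [/eqP -> |/forallP h]; first exact/forallP.
  by apply/eqP/ffunP => j; apply/eqP/h.
have i0 : 'I_n by exact: Ordinal hk.
rewrite (take_nth i0) ?size_enum_ord // foldl_rcons.
set i := nth i0 _ k; have val_i : nat_of_ord i = k by rewrite /i nth_enum_ord.
have IHk a' w := IH a' w (ltnW hk).
have ind c : [forall j : 'I_n, (k <= j)%N ==> (bset u i c j == t j)] =
             (c == t i) && [forall j : 'I_n, (k < j)%N ==> (u j == t j)].
  apply/forallP/andP => [h|[/eqP -> /forallP h] j]; rewrite ?ffunE.
    split; first by have := h i; rewrite ffunE eqxx val_i leqnn.
    apply/forallP => j; have := h j; rewrite ffunE.
    case: (j =P i) => [->|_]; rewrite ?val_i ?ltnn // => /implyP hj.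
    by apply/implyP => lt_kj; apply: hj; lia.
  case: (j =P i) => [->|/eqP ji]; rewrite ?eqxx ?implybT //; have := h j.
  move=> /implyP hj; apply/implyP => le_kj; apply: hj.
  have : nat_of_ord j != k by rewrite -val_i; apply: contra ji => /eqP/val_inj->.
  lia.
rewrite /auxmul; set acc := foldl _ _ _.
rewrite (eq_bigr (fun p => R0 R i (a, u) (p.1, p.2) * acc (p.1, p.2) (b, t))); last by case.
rewrite -(pair_bigA _ (fun a' w => R0 R i (a, u) (a', w) * acc (a', w) (b, t))) {}/acc /=.
rewrite mulr_sumr; apply: eq_bigr => a' _.
rewrite R0_mulr_sum (bigD1 (t i)) //= big1 ?addr0; last first.
  by move=> c /negbTE ne; rewrite IHk ind ne mul0r mulr0.
rewrite IHk ind eqxx /= -val_i !bitE mulrCA; congr (_ * (_ * _)).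
by apply: eq_Tprefix => j lt_ji; rewrite bit_bset ltn_eqF.
Qed.

Lemma TmonE a u b t : @Tmon R n (a, u) (b, t) = Tprefix u t b n a.
Proof.
rewrite /Tmon -(take_size (enum 'I_n)) size_enum_ord Tmon_take //.
by rewrite (_ : [forall j, _] = true) ?mul1r //; apply/forallP => j; rewrite leqNgt ltn_ord.
Qed.

End Monodromy.

(* Index [j] of the weight [omega_j] of [R] at a site with incoming auxiliary state [c],
   input bit [x] and output bit [y]. *)
Definition weight_index (c x y : bool) : nat :=
  match c, x, y with
  | false, false, false => 1
  | true, true, true => 2
  | false, true, true => 3
  | true, false, false => 4
  | true, false, true => 5
  | false, true, false => 6
  | _, _, _ => 0
  end.

Lemma RentryE (R : numClosedFieldType) (a y c x : bool) :
  Rentry R a y c x = if (a + y == c + x)%N then omega R (weight_index c x y) else 0%R.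
Proof. by case: a; case: y; case: c; case: x. Qed.

Lemma conservation_step (S T b : nat) (c a x y : bool) :
  c = (S < b + T)%N :> bool -> (S <= b + T <= S + 1)%N ->
  (a + y == c + x)%N = (S + y <= b + (T + x) <= S + y + 1)%N && (a == (S + y < b + (T + x))%N).
Proof. by move=> -> h; case: a; case: x; case: y => /=; case: ltnP => /=; lia. Qed.

Section ClosedForm.
Variables (R : numClosedFieldType) (n : nat) (s t : bstring n).
Local Notation S := (pcount (bit s)).
Local Notation T := (pcount (bit t)).
Local Open Scope ring_scope.

(* Starting from [b], the auxiliary state after [i] sites is forced by conservation to be
   [b + T i - S i]; the path exists iff this stays in [{0, 1}]. *)
Definition aux_state (b : bool) i := (S i < b + T i)%N.
Definition admissible (b : bool) k := all (fun i => S i <= b + T i <= S i + 1)%N (iota 0 k.+1).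
Definition site_index (b : bool) i := weight_index (aux_state b i) (bit t i) (bit s i).

Lemma admissibleS b k :
  admissible b k.+1 = admissible b k && (S k.+1 <= b + T k.+1 <= S k.+1 + 1)%N.
Proof. by rewrite /admissible -(addn1 k.+1) iotaD all_cat /= andbT add0n addn1. Qed.

Lemma admissible_last b k : admissible b k -> (S k <= b + T k <= S k + 1)%N.
Proof. by move/allP; apply; rewrite mem_iota /=; lia. Qed.

Lemma TprefixE b k a : Tprefix R s t b k a =
  if admissible b k && (a == aux_state b k)
  then \prod_(i < k) omega R (site_index b i) else 0.
Proof.
elim: k a => [|k IH] a.
  by rewrite /= big_ord0 /admissible /aux_state /= !pcount0 addn0; case: a; case: b.
rewrite /= (bigD1 (aux_state b k)) //= big1 => [|a' ne]; last by rewrite IH (negbTE ne) andbF mulr0.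
rewrite addr0 IH eqxx andbT admissibleS.
case adm: (admissible b k) => /=; last by rewrite mulr0.
have cons := conservation_step a (bit t k) (bit s k) (erefl (aux_state b k)) (admissible_last adm).
rewrite /aux_state in cons; rewrite RentryE big_ord_recr /= /site_index /aux_state !pcountS -cons.
by case: ifP; rewrite ?mul0r // mulrC.
Qed.

End ClosedForm.

(** * The skew diagram of two interlaced strings *)

Lemma badj_sym l n (b : {set 'I_l * 'I_(n - l)}) : ssrbool.symmetric (badj b).
Proof.
move=> x y; rewrite /badj andbA [(x \in b) && _]andbC -andbA; congr (_ && (_ && _)).
move: (val x.1) (val x.2) (val y.1) (val y.2) => a b' c d.
by rewrite (eq_sym c a) (eq_sym d b'); congr orb; congr andb; apply: orbC.
Qed.

Lemma sum_mem_card (T : finType) (A : {pred T}) : \sum_x (x \in A : nat) = #|A|.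
Proof. by rewrite -sum1_card [RHS]big_mkcond; apply: eq_bigr => x _; case: (x \in A). Qed.

Section Projections.
Variables (l n : nat) (b : {set 'I_l * 'I_(n - l)}).

Lemma card_rows_rbar : #|[set x.1 | x in b]| + rbar b = l.
Proof.
rewrite /rbar.
have -> : [set i : 'I_l | [forall x in b, x.1 != i]] = ~: [set x.1 | x in b].
  apply/setP => k; rewrite !inE; apply/forallP/negP => [h /imsetP [x hx ek]|h x].
    by move: (h x); rewrite hx ek eqxx.
  by apply/implyP => hx; apply/negP => /eqP ek; apply: h; rewrite -ek; apply: imset_f.
by rewrite cardsC card_ord.
Qed.

Lemma card_cols_cbar : #|[set x.2 | x in b]| + cbar b = n - l.
Proof.
rewrite /cbar.
have -> : [set j : 'I_(n - l) | [forall x in b, x.2 != j]] = ~: [set x.2 | x in b].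
  apply/setP => k; rewrite !inE; apply/forallP/negP => [h /imsetP [x hx ek]|h x].
    by move: (h x); rewrite hx ek eqxx.
  by apply/implyP => hx; apply/negP => /eqP ek; apply: h; rewrite -ek; apply: imset_f.
by rewrite cardsC card_ord.
Qed.

End Projections.

Section Sites.
Variables (n : nat) (s t : bstring n).
Local Notation S := (pcount (bit s)).
Local Notation T := (pcount (bit t)).

Definition active m := S m < T m.
Definition interlaced := forall m, S m <= T m <= (S m).+1.
Definition site_type i := weight_index (active i) (bit t i) (bit s i).
Definition ntype k := \sum_(i < n) (site_type i == k : nat).

Lemma active0 : active 0 = false.
Proof. by rewrite /active !pcount0. Qed.

Fixpoint run_start m := if m is m'.+1 then (if active m' then run_start m' else m) else 0.

Lemma run_startS m : active m -> run_start m.+1 = run_start m.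
Proof. by move=> /= ->. Qed.

Lemma run_start_le m : run_start m <= m.
Proof. by elim: m => [|m IH] //=; case: (active m); lia. Qed.

Lemma run_start_fix m : (run_start m.+1 == m.+1) = ~~ active m.
Proof.
by rewrite /=; case: (active m) => /=; [have := run_start_le m; lia | rewrite eqxx].
Qed.

Lemma run_start_active m :
  active m -> active (run_start m) /\ run_start (run_start m) = run_start m.
Proof.
elim: m => [|m IH] /=; first by rewrite active0.
case act: (active m) => act1; first exact: IH.
by split => //=; rewrite act.
Qed.

Lemma run_start_const m1 m2 : m1 <= m2 -> (forall i, m1 <= i <= m2 -> active i) ->
  run_start m2 = run_start m1.
Proof.
move=> h; rewrite -(subnKC h); elim: (m2 - m1) => [|d IH] act; first by rewrite addn0.
by rewrite addnS run_startS ?IH // => [i hi|]; apply: act; lia.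
Qed.

Hypothesis inter : interlaced.

Lemma site_step i : site_type i != 0 /\ active i.+1 = (bit s i < active i + bit t i).
Proof.
have := inter i; have := inter i.+1; rewrite /site_type /active !pcountS.
by case: (bit t i); case: (bit s i) => /=; case: ltnP => h /=; lia.
Qed.

Lemma site_type_range i : 0 < site_type i <= 6.
Proof.
by have [] := site_step i; rewrite /site_type; case: (active i); case: (bit t i); case: (bit s i).
Qed.

Lemma site_type_facts i :
  [/\ (site_type i == 6) = ~~ active i && active i.+1,
      (site_type i == 5) = active i && ~~ active i.+1,
      (bit t i : nat) = (site_type i == 2) + (site_type i == 3) + (site_type i == 6),
      (~~ bit t i : nat) = (site_type i == 1) + (site_type i == 4) + (site_type i == 5) &
      (active i.+1 : nat) = (site_type i == 2) + (site_type i == 4) + (site_type i == 6)].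
Proof.
have [ty ->] := site_step i; move: ty; rewrite /site_type.
by case: (active i); case: (bit t i); case: (bit s i).
Qed.

End Sites.

Section SkewDiagram.
Variables (n l : nat) (s t : bstring n).
Hypotheses (l_le_n : l <= n) (count_s : pcount (bit s) n = l) (count_t : pcount (bit t) n = l).
Local Notation S := (pcount (bit s)).
Local Notation T := (pcount (bit t)).
Implicit Types x y z w : 'I_l * 'I_(n - l).

Definition diagram := skewd l n (label s) (label t).

(* Row [i] of the diagram belongs to the 1 of rank [l - 1 - i]; the box [(i, j)] is read off
   at the site [box_site (i, j)] of the strings. *)
Definition box_rank x := l - 1 - x.1.
Definition box_site x := box_rank x + x.2 + 1.

Local Notation active := (active s t).
Local Notation interlaced := (interlaced s t).
Local Notation site_type := (site_type s t).
Local Notation ntype := (ntype s t).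
Local Notation run_start := (run_start s t).

Lemma count_s_stable m : n <= m -> S m = l.
Proof. by move=> h; rewrite pcount_stable_bit. Qed.

Lemma count_t_stable m : n <= m -> T m = l.
Proof. by move=> h; rewrite pcount_stable_bit. Qed.

Lemma count_s_le m : S m <= l.
Proof.
by case: (leqP m n) => h; [rewrite -count_s leq_pcount | rewrite count_s_stable // ltnW].
Qed.

Lemma count_t_le m : T m <= l.
Proof.
by case: (leqP m n) => h; [rewrite -count_t leq_pcount | rewrite count_t_stable // ltnW].
Qed.

Lemma zeros_s_le m : m <= n -> m - S m <= n - l.
Proof. by move=> h; have := leq_sub_pcount (bit s) h; rewrite count_s. Qed.

Lemma active_out m : n <= m -> active m = false.
Proof. by move=> h; rewrite /active count_s_stable // count_t_stable // ltnn. Qed.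

Lemma mem_diagram x : (x \in diagram) = (S (box_site x) <= box_rank x < T (box_site x)).
Proof.
rewrite /diagram /skewd inE; have hx := ltn_ord x.1.
rewrite (@label_le _ t) ?count_t //.
rewrite [x.2 < _]ltnNge (@label_le _ s) ?count_s //.
by rewrite -leqNgt /box_site /box_rank andbC.
Qed.

Lemma mem_diagram_at x m : box_site x = m -> (x \in diagram) = (S m <= box_rank x < T m).
Proof. by move=> <-; apply: mem_diagram. Qed.

Lemma active_box m : active m -> exists2 x, x \in diagram & box_site x = m /\ S m = box_rank x.
Proof.
move=> act; have hmn : m <= n by case: (leqP m n) => // h; rewrite active_out // ltnW in act.
have hT := pcount_le (bit t) m; have hTl := count_t_le m.
move: act; rewrite /active => act.
have hk : l - 1 - S m < l by lia.
have hc : m - 1 - S m < n - l by have := zeros_s_le hmn; lia.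
have e : l - 1 - (l - 1 - S m) + (m - 1 - S m) + 1 = m by lia.
exists (Ordinal hk, Ordinal hc); first by rewrite mem_diagram /box_site /box_rank /= e; lia.
by rewrite /box_site /box_rank /= e; split; lia.
Qed.

Lemma subpart_label_iff : (forall m, S m <= T m) <-> subpart (label t) (label s).
Proof.
split.
  move=> ST; apply/allP => k; rewrite mem_iota size_label count_s add0n => /andP [_ hk].
  set c := nth 0 (label s) k.
  have := @label_le _ s k c; rewrite count_s leqnn => /(_ hk) /esym le_s.
  by rewrite (@label_le _ t) count_t // (leq_trans le_s (ST _)).
move=> sub m; apply/negPn/negP; rewrite -ltnNge => lt_TS.
have hSl := count_s_le m; have hTm := pcount_le (bit t) m.
set j := T m in lt_TS hTm; set c := m - 1 - j.
have hk : l - 1 - j < l by lia.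
move/allP: sub => /(_ (l - 1 - j)); rewrite mem_iota size_label count_s add0n hk => /(_ isT).
have e : l - 1 - (l - 1 - j) = j by lia.
have e2 : j + c + 1 = m by have := pcount_le (bit s) m; rewrite /c; lia.
have := @label_le _ s (l - 1 - j) c; rewrite count_s e e2 lt_TS => /(_ hk) le_s.
have := @label_le _ t (l - 1 - j) c; rewrite count_t e e2 ltnn => /(_ hk) le_t.
by move/leq_trans => /(_ _ le_s); rewrite le_t.
Qed.

Lemma broken_rim_hook_diagram : (forall m, T m <= (S m).+1) -> broken_rim_hook diagram.
Proof.
move=> TS; apply/negP => /existsP [[[x1 lx1] [x2 lx2]]].
move=> /existsP [[[y1 ly1] [y2 ly2]] /andP [/eqP /= e1 /and5P [/eqP /= e2 hx hy _ _]]].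
have site_y : box_site (Ordinal ly1, Ordinal ly2) = box_site (Ordinal lx1, Ordinal lx2).
  by rewrite /box_site /box_rank /=; lia.
rewrite mem_diagram in hx; rewrite mem_diagram site_y in hy.
by move: hx hy (TS (box_site (Ordinal lx1, Ordinal lx2))); rewrite /box_rank /=; lia.
Qed.

(* A site where [t] is two 1's ahead of [s] exhibits a 2x2 block of the diagram. *)
Lemma diagram_gap : (forall m, S m <= T m) -> broken_rim_hook diagram ->
  forall m, T m <= (S m).+1.
Proof.
move=> ST brh m; apply/negPn/negP; rewrite -ltnNge => gap.
have hTl := count_t_le m; have hTm := pcount_le (bit t) m.
have hmn : m <= n.
  case: (leqP m n) => // /ltnW h.
  by move: gap; rewrite count_s_stable // count_t_stable //; lia.
have hz := zeros_s_le hmn.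
have [hS1 hS2] := andP (pcountS_le (bit s) m); have [hT1 hT2] := andP (pcountS_le (bit t) m).
have em : m = (m - 1).+1 by lia.
have [hS3 hS4] := andP (pcountS_le (bit s) (m - 1)); rewrite -em in hS3 hS4.
have [hT3 hT4] := andP (pcountS_le (bit t) (m - 1)); rewrite -em in hT3 hT4.
have hx1 : l - 1 - (S m + 1) < l by lia.
have hy1 : l - 1 - (S m + 1) + 1 < l by lia.
have hx2 : m - 2 - S m < n - l by lia.
have hy2 : m - 2 - S m + 1 < n - l by lia.
move/negP: brh; apply; apply/existsP; exists (Ordinal hx1, Ordinal hx2).
apply/existsP; exists (Ordinal hy1, Ordinal hy2).
apply/andP; split; first by rewrite /= addn1.
apply/and5P; split; first by rewrite /= addn1.
- by rewrite (@mem_diagram_at _ m) /box_rank /=; [lia | rewrite /box_site /box_rank /=; lia].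
- by rewrite (@mem_diagram_at _ m) /box_rank /=; [lia | rewrite /box_site /box_rank /=; lia].
- by rewrite (@mem_diagram_at _ m.+1) /box_rank /=; [lia | rewrite /box_site /box_rank /=; lia].
- by rewrite (@mem_diagram_at _ (m - 1)) /box_rank /=; [lia | rewrite /box_site /box_rank /=; lia].
Qed.

Lemma interlacedP : reflect interlaced (subpart (label t) (label s) && broken_rim_hook diagram).
Proof.
apply: (iffP idP) => [/andP [/subpart_label_iff ST brh] m | inter].
  by rewrite ST diagram_gap.
have ST m : S m <= T m by case/andP: (inter m).
by rewrite (proj1 subpart_label_iff ST) broken_rim_hook_diagram // => m; case/andP: (inter m).
Qed.

Section Interlaced.
Hypothesis inter : interlaced.

Lemma mem_diagram_active x :
  (x \in diagram) = active (box_site x) && (S (box_site x) == box_rank x).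
Proof.
rewrite mem_diagram /active; have /andP [h1 h2] := inter (box_site x).
by apply/andP/andP => [[h3 h4]|[h3 /eqP h4]]; split; lia.
Qed.

Lemma diagram_boxP x : x \in diagram ->
  [/\ active (box_site x), S (box_site x) = box_rank x & T (box_site x) = (box_rank x).+1].
Proof.
rewrite mem_diagram_active => /andP [act /eqP e]; split => //.
by have := inter (box_site x); move: act; rewrite /active; lia.
Qed.

Lemma box_site_inj : {in diagram &, injective box_site}.
Proof.
move=> [[x1 lx1] [x2 lx2]] [[y1 ly1] [y2 ly2]] hx hy e.
have [_ sx _] := diagram_boxP hx; have [_ sy _] := diagram_boxP hy.
rewrite e sy in sx; move: e sx; rewrite /box_site /box_rank /= => e sx.
have e1 : x1 = y1 by lia.
have e2 : x2 = y2 by lia.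
by subst; congr pair; apply: val_inj.
Qed.

Lemma card_diagram_sites (Q : pred nat) :
  #|[set x in diagram | Q (box_site x)]| = \sum_(m < n.+1) (active m && Q m : nat).
Proof.
have site_lt x : x \in diagram -> box_site x < n.+1.
  move=> /diagram_boxP [act _ _]; rewrite ltnS leqNgt; apply/negP => /ltnW h.
  by rewrite active_out in act.
rewrite -(@card_in_imset _ _ (fun x => inord (box_site x) : 'I_n.+1)); last first.
  move=> x y /setIdP [hx _] /setIdP [hy _] /(f_equal val) /=.
  by rewrite !inordK ?site_lt //; apply: box_site_inj.
have -> : [set inord (box_site x) | x in [set x in diagram | Q (box_site x)]] =
           [set m : 'I_n.+1 | active m && Q m].
  apply/setP => m; rewrite [in RHS]inE; apply/imsetP/idP => [[x /setIdP [hx hq] ->]|/andP [act hq]].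
    by rewrite inordK ?site_lt // hq andbT; case: (diagram_boxP hx).
  have [x hx [site_x _]] := active_box act.
  by exists x; [apply/setIdP; rewrite site_x | apply: val_inj; rewrite /= inordK site_x].
by rewrite -sum1dep_card big_mkcond /=; apply: eq_bigr => m _; case: (active m && Q m).
Qed.

Definition box_run x := run_start (box_site x).
Definition component x := [set y in diagram | connect (badj diagram) x y].

Lemma badj_box_run x y : badj diagram x y -> box_run x = box_run y.
Proof.
move=> /and3P [hx hy hadj].
have [actx _ _] := diagram_boxP hx; have [acty _ _] := diagram_boxP hy.
have : box_site y = (box_site x).+1 \/ box_site x = (box_site y).+1.
  move: hadj actx acty; case: x {hx} => [[x1 lx1] [x2 lx2]]; case: y {hy} => [[y1 ly1] [y2 ly2]].
  by rewrite /box_site /box_rank /= => /orP [] /andP [/eqP e1 /orP [] /eqP e2]; lia.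
by rewrite /box_run; case=> ->; rewrite run_startS.
Qed.

Lemma connect_box_run x y : connect (badj diagram) x y -> box_run x = box_run y.
Proof.
move=> /connectP [p hp ->]; elim: p x hp => [|z p IH] x //= /andP [hxz hp].
by rewrite (badj_box_run hxz) IH.
Qed.

Lemma badj_consecutive x y : x \in diagram -> y \in diagram ->
  box_site y = (box_site x).+1 -> badj diagram x y.
Proof.
move=> hx hy e; rewrite /badj hx hy /=.
have [h1 h2] := andP (pcountS_le (bit s) (box_site x)).
have [_ sx _] := diagram_boxP hx; have [_ sy _] := diagram_boxP hy; rewrite e in sy.
move: e sx sy h1 h2; case: x {hx} => [[x1 lx1] [x2 lx2]]; case: y {hy} => [[y1 ly1] [y2 ly2]].
rewrite /box_site /box_rank /= => e sx sy h1 h2.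
case: (ltnP (S (l - 1 - x1 + x2 + 1)) (S (l - 1 - x1 + x2 + 1).+1)) => lt.
  by apply/orP; right; apply/andP; split; [apply/eqP; lia | apply/orP; left; apply/eqP; lia].
by apply/orP; left; apply/andP; split; [apply/eqP; lia | apply/orP; right; apply/eqP; lia].
Qed.

Lemma run_start_connect d x z : x \in diagram -> z \in diagram ->
  box_site x - box_run x = d -> box_site z = box_run x -> connect (badj diagram) z x.
Proof.
elim: d x => [|d IH] x hx hz; have := run_start_le s t (box_site x); rewrite /box_run => le_run.
  by move=> hd hzx; rewrite (@box_site_inj z x) //; lia.
move=> hd hzx; have em : box_site x = (box_site x).-1.+1 by lia.
have act : active (box_site x).-1.
  apply/negPn/negP => hn; move: hd; rewrite em.
  by have := run_start_fix s t (box_site x).-1; rewrite hn => /eqP ->; lia.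
have [w hw [site_w _]] := active_box act.
have run_w : box_run w = box_run x by rewrite /box_run site_w em run_startS // -em.
apply: (connect_trans (y := w)); first by apply: IH; rewrite ?run_w /box_run //; lia.
by apply: connect1; apply: badj_consecutive => //; lia.
Qed.

Lemma box_run_connect x y : x \in diagram -> y \in diagram ->
  box_run x = box_run y -> connect (badj diagram) x y.
Proof.
move=> hx hy e; have [actx _ _] := diagram_boxP hx.
have [act0 _] := run_start_active actx.
have [z hz [site_z _]] := active_box act0.
have zx := run_start_connect hx hz erefl site_z.
have zy : connect (badj diagram) z y by apply: (run_start_connect hy hz erefl); rewrite site_z -e.
by rewrite (sym_connect_sym (@badj_sym _ _ diagram)) in zx; apply: connect_trans zx zy.
Qed.

Lemma componentE x : x \in diagram -> component x = [set y in diagram | box_run y == box_run x].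
Proof.
move=> hx; apply/setP => y.
apply/setIdP/setIdP => [[hy /connect_box_run ->]|[hy /eqP e]]; split => //.
exact: box_run_connect hx hy (esym e).
Qed.

Lemma box_run_row x z : x \in diagram -> z \in diagram -> x.1 = z.1 -> box_run x = box_run z.
Proof.
wlog le_xz : x z / box_site x <= box_site z.
  move=> W hx hz e; case: (leqP (box_site x) (box_site z)) => h; first exact: W.
  by symmetry; apply: W; rewrite 1?ltnW.
move=> hx hz e; rewrite /box_run; symmetry; apply: run_start_const => // i /andP [h1 h2].
have [_ sx tx] := diagram_boxP hx; have [_ sz tz] := diagram_boxP hz.
have ez : box_rank z = box_rank x by rewrite /box_rank e.
have := leq_pcount (bit s) h1; have := leq_pcount (bit s) h2.
have := leq_pcount (bit t) h1; have := leq_pcount (bit t) h2.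
by rewrite /active; lia.
Qed.

Lemma box_run_col x z : x \in diagram -> z \in diagram -> x.2 = z.2 -> box_run x = box_run z.
Proof.
wlog le_xz : x z / box_site x <= box_site z.
  move=> W hx hz e; case: (leqP (box_site x) (box_site z)) => h; first exact: W.
  by symmetry; apply: W; rewrite 1?ltnW.
move=> hx hz e; rewrite /box_run; symmetry; apply: run_start_const => // i /andP [h1 h2].
have [_ sx tx] := diagram_boxP hx; have [_ sz tz] := diagram_boxP hz.
have ex : box_site x = box_rank x + x.2 + 1 by [].
have ez : box_site z = box_rank z + x.2 + 1 by rewrite /box_site e.
have := leq_sub_pcount (bit s) h1; have := leq_sub_pcount (bit s) h2.
have := leq_sub_pcount (bit t) h1; have := leq_sub_pcount (bit t) h2.
have := pcount_le (bit s) i; have := pcount_le (bit t) i.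
move: ex ez sx sz tx tz; rewrite /active.
move: (box_site x) (box_site z) (box_rank x) (box_rank z) (nat_of_ord x.2) => a b c d f.
lia.
Qed.

(* A component starts at each site where [active] switches on. *)
Lemma card_components : #|components diagram| = \sum_(i < n) (~~ active i && active i.+1 : nat).
Proof.
set B0 := [set x in diagram | run_start (box_site x) == box_site x].
have -> : components diagram = [set component x | x in B0].
  apply/setP => C; apply/imsetP/imsetP => [[x hx ->]|[x /setIdP [hx _] ->]]; last by exists x.
  have [act _ _] := diagram_boxP hx; have [act0 fix0] := run_start_active act.
  have [z hz [site_z _]] := active_box act0.
  exists z; first by apply/setIdP; rewrite site_z fix0.
  by rewrite -/(component x) (componentE hx) (componentE hz) /box_run site_z fix0.
rewrite card_in_imset; last first.
  move=> x y /setIdP [hx /eqP x0] /setIdP [hy /eqP y0] e.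
  have : y \in component x by rewrite e (componentE hy) inE hy eqxx.
  rewrite (componentE hx) => /setIdP [_ /eqP run_xy].
  by apply: box_site_inj => //; rewrite -x0 -y0.
rewrite /B0 (card_diagram_sites (fun m => run_start m == m)) big_ord_recl active0 /= add0n.
by apply: eq_bigr => i _; rewrite /bump /= add1n run_start_fix andbC.
Qed.

(* The row of the 1 of [t] at site [i] is empty iff that 1 goes straight through. *)
Lemma row_emptyE i : i < n -> bit t i ->
  [forall x in diagram, nat_of_ord x.1 != l - 1 - T i] = ~~ active i && bit s i.
Proof.
move=> lt_in ti; have [ty next] := site_step inter i; rewrite /site_type ti in ty next.
have hTi1 : T i.+1 = (T i).+1 by rewrite pcountS ti addn1.
have hTl := count_t_le i.+1; have hST := inter i.
case act: (active i) ty next => /=; case si: (bit s i) => //= _ next.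
- apply/negbTE/negP => /forallP empty.
  have [x hx [_ sx]] := active_box next; have := empty x; rewrite hx /= => /eqP; apply.
  move: sx act; rewrite pcountS si /box_rank /active; have := ltn_ord x.1; lia.
- apply/forallP => x; apply/implyP => hx; apply/negP => /eqP x1.
  have [_ sx tx] := diagram_boxP hx.
  have rank_x : box_rank x = T i by rewrite /box_rank x1; lia.
  have hS1 : S i.+1 = (S i).+1 by rewrite pcountS si addn1.
  move: act; rewrite /active => act.
  case: (leqP (box_site x) i) => le; first by have := leq_pcount (bit t) le; lia.
  by have := leq_pcount (bit s) le; lia.
- apply/negbTE/negP => /forallP empty.
  have [x hx [_ sx]] := active_box next; have := empty x; rewrite hx /= => /eqP; apply.
  move: sx; move/negbT: act; rewrite /active -leqNgt pcountS si addn0 /box_rank.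
  by move: (ltn_ord x.1) hST; move: (nat_of_ord x.1) (S i) (T i) => x1 a b; lia.
Qed.

(* The column of the 0 of [t] at site [i] is empty iff that 0 goes straight through. *)
Lemma col_emptyE i : i < n -> ~~ bit t i ->
  [forall x in diagram, nat_of_ord x.2 != i - T i] = ~~ active i && ~~ bit s i.
Proof.
move=> lt_in /negbTE ti; have [ty next] := site_step inter i; rewrite /site_type ti in ty next.
have hTi1 : T i.+1 = T i by rewrite pcountS ti addn0.
have hST := inter i; have hTi := pcount_le (bit t) i.
case act: (active i) ty next => /=.
  move=> _ _; apply/negbTE/negP => /forallP empty.
  have [x hx [site_x sx]] := active_box act; have := empty x; rewrite hx /= => /eqP; apply.
  have [_ _ tx] := diagram_boxP hx; rewrite site_x in tx.
  by move: site_x tx; rewrite /box_site; move: (box_rank x) (nat_of_ord x.2) (T i) => r c b; lia.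
case si: (bit s i) => //= _ next.
apply/forallP => x; apply/implyP => hx; apply/negP => /eqP x2.
have [_ sx tx] := diagram_boxP hx.
have hS1 : S i.+1 = S i by rewrite pcountS si addn0.
move: act; rewrite /active => act.
have site_x : box_site x = box_rank x + (i - T i) + 1 by rewrite /box_site x2.
case: (leqP (box_site x) i) => le; first by have := leq_sub_pcount (bit s) le; lia.
by have := leq_sub_pcount (bit t) le; lia.
Qed.

Lemma rbar_diagram : rbar diagram = ntype 3.
Proof.
rewrite /rbar -sum_mem_card (reindex_inj rev_ord_inj) /=.
transitivity (\sum_(j < T n) ([forall x in diagram, nat_of_ord x.1 != l - 1 - j] : nat)).
  rewrite count_t; apply: eq_bigr => j _; rewrite inE; congr nat_of_bool.
  apply: eq_forallb => x.
  by rewrite -val_eqE /= (_ : l - j.+1 = l - 1 - j) //; lia.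
rewrite -(sum_pcount_rank _ (fun j => [forall x in diagram, nat_of_ord x.1 != l - 1 - j])).
apply: eq_bigr => i _; rewrite /site_type.
case ti: (bit t i); last by case: (active i); case: (bit s i).
by rewrite /= row_emptyE //; case: (active i); case: (bit s i).
Qed.

Lemma cbar_diagram : cbar diagram = ntype 1.
Proof.
rewrite /cbar -sum_mem_card.
have zeros_t : pcount (fun i => ~~ bit t i) n = n - l by rewrite pcountN count_t.
transitivity (\sum_(c < pcount (fun i => ~~ bit t i) n)
                ([forall x in diagram, nat_of_ord x.2 != c] : nat)).
  by rewrite zeros_t; apply: eq_bigr => c _; rewrite inE.
rewrite -(sum_pcount_rank _ (fun c => [forall x in diagram, nat_of_ord x.2 != c])).
apply: eq_bigr => i _; rewrite /site_type.
case ti: (bit t i); first by case: (active i); case: (bit s i).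
by rewrite /= pcountN col_emptyE ?ti //; case: (active i); case: (bit s i).
Qed.

Lemma card_diagram : #|diagram| = \sum_(i < n) (active i.+1 : nat).
Proof.
rewrite (_ : #|diagram| = #|[set x in diagram | xpredT (box_site x)]|); last first.
  by apply: eq_card => x; apply/idP/setIdP => [|[]].
by rewrite (card_diagram_sites xpredT) big_ord_recl active0; apply: eq_bigr => i _; rewrite andbT.
Qed.

Lemma mem_component x : x \in diagram -> x \in component x.
Proof. by move=> hx; apply/setIdP; split => //; apply: connect0. Qed.

Lemma component_sub x : component x \subset diagram.
Proof. by apply/subsetP => y /setIdP []. Qed.

Lemma card_proj_component_gt0 (K : finType) (pr : 'I_l * 'I_(n - l) -> K) h :
  h \in components diagram -> 0 < #|pr @: h|.
Proof.
move=> /imsetP [y hy ->]; apply/card_gt0P; exists (pr y).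
by apply: imset_f; apply: mem_component.
Qed.

Lemma sum_card_proj_components (K : finType) (pr : 'I_l * 'I_(n - l) -> K) :
  {in diagram &, forall x z, pr x = pr z -> box_run x = box_run z} ->
  \sum_(h in components diagram) #|pr @: h| = #|pr @: diagram|.
Proof.
move=> pr_run.
have comp_k k y : y \in diagram -> k \in pr @: component y ->
    exists2 z, z \in diagram & k = pr z /\ box_run z = box_run y.
  move=> hy /imsetP [z hz ->]; have zd := subsetP (component_sub y) z hz.
  by exists z; rewrite // (componentE hy) in hz; case/setIdP: hz => _ /eqP.
under eq_bigr => h _ do rewrite -sum_mem_card.
rewrite exchange_big -sum_mem_card /=; apply: eq_bigr => k _.
case: (boolP (k \in pr @: diagram)) => [/imsetP [x0 hx0 ->]|hk].
  rewrite (bigD1 (component x0)); last by apply: imset_f.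
  rewrite imset_f ?mem_component // big1 // => h /andP [/imsetP [y hy eh] ne].
  have {}eh : h = component y := eh; subst h.
  apply/eqP; rewrite eqb0; apply/negP => kin; have [z hz [e run_z]] := comp_k _ y hy kin.
  case/eqP: ne; rewrite (componentE hy) (componentE hx0) -run_z.
  by rewrite (pr_run z x0) ?e.
rewrite big1 // => h /imsetP [y hy eh]; have {}eh : h = component y := eh; subst h.
apply/eqP; rewrite eqb0; apply/negP.
by move=> kin; have [z hz [e _]] := comp_k _ y hy kin; case/negP: hk; rewrite e imset_f.
Qed.

Lemma ntype6 : ntype 6 = #|components diagram|.
Proof.
by rewrite card_components; apply: eq_bigr => i _; have [-> _ _ _ _] := site_type_facts inter i.
Qed.

(* Components end where [active] switches off, as often as it switches on. *)
Lemma ntype5 : ntype 5 = #|components diagram|.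
Proof.
rewrite card_components /ntype.
rewrite (eq_bigr (fun i : 'I_n => (active i && ~~ active i.+1 : nat))); last first.
  by move=> i _; have [_ -> _ _ _] := site_type_facts inter i.
by have := ascents_descents active n; rewrite active0 active_out // !addn0 => ->.
Qed.

Lemma ntype_ones : ntype 2 + ntype 3 + ntype 6 = l.
Proof.
rewrite /ntype -!big_split /= -count_t; apply: eq_bigr => i _.
by have [_ _ -> _ _] := site_type_facts inter i.
Qed.

Lemma ntype_zeros : ntype 1 + ntype 4 + ntype 5 = n - l.
Proof.
rewrite /ntype -!big_split /= -count_t -pcountN; apply: eq_bigr => i _.
by have [_ _ _ -> _] := site_type_facts inter i.
Qed.

Lemma ntype_even : ntype 2 + ntype 4 + ntype 6 = #|diagram|.
Proof.
rewrite card_diagram /ntype -!big_split; apply: eq_bigr => i _.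
by have [_ _ _ _ ->] := site_type_facts inter i.
Qed.

Lemma sum_predn_components (f : {set 'I_l * 'I_(n - l)} -> nat) :
  (forall h, h \in components diagram -> 0 < f h) ->
  \sum_(h in components diagram) (f h).-1 = \sum_(h in components diagram) f h - ntype 6.
Proof.
move=> f_gt0; rewrite ntype6 -sum1_card -sumnB => [|h /f_gt0 //].
by apply: eq_bigr => h _; rewrite subn1.
Qed.

Lemma ntype2 : ntype 2 = \sum_(h in components diagram) (nrows h).-1.
Proof.
rewrite sum_predn_components => [|h]; last exact: card_proj_component_gt0.
rewrite sum_card_proj_components => [|x z hx hz]; last exact: box_run_row.
by have := card_rows_rbar diagram; have := ntype_ones; rewrite rbar_diagram; lia.
Qed.

Lemma ntype4 : ntype 4 = \sum_(h in components diagram) (ncols h).-1.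
Proof.
rewrite sum_predn_components => [|h]; last exact: card_proj_component_gt0.
rewrite sum_card_proj_components => [|x z hx hz]; last exact: box_run_col.
by have := card_cols_cbar diagram; have := ntype_zeros; rewrite cbar_diagram ntype5 -ntype6; lia.
Qed.

End Interlaced.

End SkewDiagram.

(** * Weights and degrees *)

(* Reversing the auxiliary state exchanges the weights as in [Omegabar]. *)
Definition dual_index (k : nat) : nat :=
  match k with 1 => 4 | 2 => 3 | 3 => 2 | 4 => 1 | 5 => 6 | 6 => 5 | _ => 0 end.

Lemma weight_index_dual c x y : weight_index (~~ c) y x = dual_index (weight_index c x y).
Proof. by case: c; case: x; case: y. Qed.

Section Weights.
Variable R : numClosedFieldType.
Local Open Scope ring_scope.

Lemma prod_weight_counts n (w : nat -> {mpoly R[6]}) (f : nat -> nat) :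
  (forall i, (i < n)%N -> (0 < f i <= 6)%N) ->
  let c k := (\sum_(i < n) (f i == k : nat))%N in
  \prod_(i < n) w (f i) = w 1%N ^+ c 1%N * w 2%N ^+ c 2%N * w 3%N ^+ c 3%N *
                          w 4%N ^+ c 4%N * w 5%N ^+ c 5%N * w 6%N ^+ c 6%N.
Proof.
elim: n => [|n IH] f_range c; first by rewrite /c big_ord0 !big_ord0 !expr0 !mulr1.
rewrite big_ord_recr /= IH => [|i lt_in]; last by apply: f_range; lia.
rewrite /c !big_ord_recr /= !exprD.
move: (f_range n (ltnSn n)); case: (f n) => [|[|[|[|[|[|[|k]]]]]]] //= _;
  rewrite ?expr0 ?expr1; ring.
Qed.

Lemma OmegaGenE (w1 w2 w3 w4 w5 w6 : {mpoly R[6]}) l n (b : {set 'I_l * 'I_(n - l)}) :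
  OmegaGen w1 w2 w3 w4 w5 w6 b =
  w1 ^+ cbar b * w2 ^+ (\sum_(h in components b) (nrows h).-1) * w3 ^+ rbar b *
  w4 ^+ (\sum_(h in components b) (ncols h).-1) * w5 ^+ #|components b| *
  w6 ^+ #|components b|.
Proof.
rewrite /OmegaGen big_split /= !prodrXr exprMn.
move: (w1 ^+ _) (w2 ^+ _) (w3 ^+ _) (w4 ^+ _) (w5 ^+ _) (w6 ^+ _) => a1 a2 a3 a4 a5 a6.
ring.
Qed.

Lemma prod_site_weights n l (s t : bstring n) (w : nat -> {mpoly R[6]}) :
  (l <= n)%N -> pcount (bit s) n = l -> pcount (bit t) n = l -> interlaced s t ->
  \prod_(i < n) w (site_type s t i) =
  OmegaGen (w 1%N) (w 2%N) (w 3%N) (w 4%N) (w 5%N) (w 6%N) (diagram l s t).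
Proof.
move=> l_le_n count_s count_t inter.
rewrite prod_weight_counts => [/=|i _]; last exact: site_type_range.
rewrite -/(ntype s t 1) -/(ntype s t 2) -/(ntype s t 3).
rewrite -/(ntype s t 4) -/(ntype s t 5) -/(ntype s t 6) OmegaGenE.
by rewrite cbar_diagram // rbar_diagram // -ntype2 // -ntype4 // -{1}ntype5 // -ntype6.
Qed.

Lemma comp246X r (m : 'X_{1..6}) :
  comp246 r ('X_[m] : {mpoly R[6]}) = if deg246 m == r then 'X_[m] else 0.
Proof.
rewrite /comp246 msuppX big_cons big_nil.
by case: ifP => _; rewrite ?mcoeffX ?eqxx ?scale1r ?addr0.
Qed.

Lemma comp246_0 r : comp246 r (0 : {mpoly R[6]}) = 0.
Proof. by rewrite /comp246 msupp0 big_nil. Qed.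

Lemma deg246_sum n (g : nat -> 'I_6) :
  deg246 (\sum_(i < n) U_(g i))%MM = (\sum_(i < n) odd (g i))%N.
Proof.
rewrite /deg246 (eq_bigr (fun k : 'I_6 => \sum_(i < n) (g i == k : nat))%N); last first.
  by move=> k _; rewrite mnm_sumE; apply: eq_bigr => i _; rewrite mnm1E.
rewrite exchange_big /=; apply: eq_bigr => i _.
rewrite big_mkcond (bigD1 (g i)) //= eqxx big1 ?addn0; first by case: (odd (g i)).
by move=> k ne; case: (odd k) => //; rewrite eq_sym (negbTE ne).
Qed.

(* [omega_j] has degree 1 in [omega_2, omega_4, omega_6] iff [j] is even. *)
Lemma comp246_prod n r (f : nat -> nat) : (forall i, (i < n)%N -> (0 < f i <= 6)%N) ->
  comp246 r (\prod_(i < n) omega R (f i)) =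
  if (\sum_(i < n) ~~ odd (f i))%N == r then \prod_(i < n) omega R (f i) else 0.
Proof.
move=> f_range.
have -> : \prod_(i < n) omega R (f i) = 'X_[\sum_(i < n) U_(inord (f i).-1)]%MM.
  by rewrite -mprodXE.
rewrite comp246X (@deg246_sum n (fun i => inord (f i).-1)).
congr (if _ == r then _ else _); apply: eq_bigr => i _.
have /andP [h1 h2] := f_range i (ltn_ord i).
by rewrite inordK; [move: h1; case: (f i) => //= k _; rewrite negbK | lia].
Qed.

Section SiteWeights.
Variables (n l : nat) (s t : bstring n).
Hypotheses (l_le_n : (l <= n)%N) (count_s : pcount (bit s) n = l) (count_t : pcount (bit t) n = l).
Hypothesis inter : interlaced s t.

Lemma sum_even_site_types : (\sum_(i < n) ~~ odd (site_type s t i))%N = #|diagram l s t|.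
Proof.
rewrite -ntype_even // /ntype -!big_split; apply: eq_bigr => i _ /=.
by have := site_type_range inter i; case: (site_type s t i) => [|[|[|[|[|[|[|k]]]]]]].
Qed.

Lemma comp246_site_weights r : comp246 r (\prod_(i < n) omega R (site_type s t i)) =
  if #|diagram l s t| == r then Omega R (diagram l s t) else 0.
Proof.
rewrite comp246_prod => [|i _]; last exact: site_type_range.
by rewrite sum_even_site_types // (prod_site_weights (omega R) l_le_n count_s count_t inter).
Qed.

Lemma comp246_dual_site_weights r :
  comp246 r (\prod_(i < n) omega R (dual_index (site_type s t i))) =
  if (n - #|diagram l s t|)%N == r then Omegabar R (diagram l s t) else 0.
Proof.
have range := site_type_range inter.
rewrite (@comp246_prod n r (dual_index \o site_type s t)) => [|i _]; last first.
  by rewrite /comp; have := range i; case: (site_type s t i) => [|[|[|[|[|[|[|k]]]]]]].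
rewrite (prod_site_weights (omega R \o dual_index) l_le_n count_s count_t inter).
rewrite -sum_even_site_types //.
have total : (\sum_(i < n) ~~ odd ((dual_index \o site_type s t) i) +
               \sum_(i < n) ~~ odd (site_type s t i))%N = n.
  rewrite -big_split /= -[X in _ = X](card_ord n) -sum1_card; apply: eq_bigr => i _.
  by have := range i; case: (site_type s t i) => [|[|[|[|[|[|[|k]]]]]]].
by congr (if _ == r then _ else _); lia.
Qed.

Lemma card_diagram_le : (#|diagram l s t| <= n)%N.
Proof.
rewrite -sum_even_site_types -[X in (_ <= X)%N](card_ord n) -sum1_card.
by apply: leq_sum => i _; apply: leq_b1.
Qed.

End SiteWeights.

Section Entries.
Variables (n l : nat) (s t : bstring n).
Hypotheses (l_le_n : (l <= n)%N) (count_t : pcount (bit t) n = l).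

Lemma admissibleP : pcount (bit s) n = l -> reflect (interlaced s t) (admissible s t false n).
Proof.
move=> count_s; apply: (iffP allP) => [adm m | inter i _]; last by have := inter i; lia.
case: (leqP m n) => [le_mn | /ltnW le_nm]; first by have := adm m; rewrite mem_iota /=; lia.
by rewrite !pcount_stable_bit // count_s count_t; lia.
Qed.

Lemma admissible_dualP : pcount (bit s) n = l -> reflect (interlaced t s) (admissible s t true n).
Proof.
move=> count_s; apply: (iffP allP) => [adm m | inter i _]; last by have := inter i; lia.
case: (leqP m n) => [le_mn | /ltnW le_nm]; first by have := adm m; rewrite mem_iota /=; lia.
by rewrite !pcount_stable_bit // count_s count_t; lia.
Qed.

Lemma Aop_closed : Aop R s t = if (pcount (bit s) n == l) && admissible s t false n
  then \prod_(i < n) omega R (site_type s t i) else 0.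
Proof.
rewrite /Aop TmonE TprefixE /aux_state count_t add0n.
case: (pcount (bit s) n =P l) => [->|ne]; first by rewrite ltnn andbT.
case adm: (admissible s t false n) => //=.
have := admissible_last adm; rewrite count_t add0n => bounds.
by case: ltnP => // le; case: ne; lia.
Qed.

Lemma Dop_closed : Dop R s t = if (pcount (bit s) n == l) && admissible s t true n
  then \prod_(i < n) omega R (dual_index (site_type t s i)) else 0.
Proof.
rewrite /Dop TmonE TprefixE.
under eq_bigr => i _ do rewrite /site_index /aux_state add1n ltnS leqNgt weight_index_dual.
rewrite /aux_state count_t add1n ltnS.
case: (pcount (bit s) n =P l) => [->|ne]; first by rewrite leqnn andbT.
case adm: (admissible s t true n) => //=.
have := admissible_last adm; rewrite count_t add1n => bounds.
by case: leqP => // le; case: ne; lia.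
Qed.

Lemma A_entry r : comp246 r (Aop R s t) =
  if (label s \in Pplus l n) && is_brh l n (label s) (label t) r
  then Omega R (skewd l n (label s) (label t)) else 0.
Proof.
rewrite Aop_closed label_Pplus //.
case: (pcount (bit s) n =P l) => [count_s|_]; last by rewrite comp246_0.
have adm_brh : admissible s t false n =
               subpart (label t) (label s) && broken_rim_hook (diagram l s t).
  exact/(sameP (admissibleP count_s))/interlacedP.
rewrite /= /is_brh -/(diagram l s t) andbA -adm_brh.
case: (admissibleP count_s) => [inter|_]; last by rewrite comp246_0.
exact: comp246_site_weights.
Qed.

Lemma D_entry r : (r <= n)%N -> comp246 r (Dop R s t) =
  if (label s \in Pplus l n) && is_brh l n (label t) (label s) (n - r)
  then Omegabar R (skewd l n (label t) (label s)) else 0.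
Proof.
move=> r_le_n; rewrite Dop_closed label_Pplus //.
case: (pcount (bit s) n =P l) => [count_s|_]; last by rewrite comp246_0.
have adm_brh : admissible s t true n =
               subpart (label s) (label t) && broken_rim_hook (diagram l t s).
  exact/(sameP (admissible_dualP count_s))/interlacedP.
rewrite /= /is_brh -/(diagram l t s) andbA -adm_brh.
case: (admissible_dualP count_s) => [inter|_]; last by rewrite comp246_0.
rewrite (comp246_dual_site_weights l_le_n count_t count_s inter).
have := card_diagram_le l_le_n count_t count_s inter.
by case: eqP; case: eqP => //; lia.
Qed.

End Entries.

Lemma big_uniq_indicator (r : seq (seq nat)) (P : pred (seq nat))
    (G : seq nat -> {mpoly R[6]}) (x : seq nat) : uniq r ->
  \sum_(lam <- r | P lam) G lam * (x == lam)%:R = if (x \in r) && P x then G x else 0.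
Proof.
move=> uniq_r; rewrite big_mkcond /=.
case: (boolP (x \in r)) => [x_r|x_r] /=.
  rewrite (bigD1_seq x) //= eqxx big1_seq ?addr0 => [|lam /andP [ne _]].
    by case: (P x); rewrite ?mulr1.
  by rewrite eq_sym (negbTE ne); case: (P lam); rewrite ?mulr0.
rewrite big1_seq // => lam /andP [_ lam_r].
by rewrite (_ : x == lam = false) ?mulr0 ?if_same //; apply: contraNF x_r => /eqP ->.
Qed.

Lemma opapply_vlab n (t : bstring n) (F : bstring n -> bstring n -> {mpoly R[6]}) :
  opapply F (vlab R n (label t)) = [ffun s => F s t].
Proof.
apply/ffunP => s; rewrite !ffunE (bigD1 t) //= ffunE eqxx mulr1 big1 ?addr0 // => u ne.
rewrite ffunE (_ : label u == label t = false) ?mulr0 //.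
by apply: contraNF ne => /eqP /label_inj ->.
Qed.

End Weights.

Local Open Scope ring_scope.

Theorem proposition4p5 (R : numClosedFieldType) (l n : nat) (mu : seq nat) :
  (l <= n)%N -> mu \in Pplus l n ->
  (forall r : nat, (r <= n - 1)%N ->
     opapply (fun s t => comp246 r (Aop R s t)) (vlab R n mu) =
     [ffun s : bstring n => \sum_(lam <- Pplus l n | is_brh l n lam mu r)
                  Omega R (skewd l n lam mu) * vlab R n lam s]) /\
  (forall r : nat, ((1 <= r <= n) || (r == n))%N ->
     opapply (fun s t => comp246 r (Dop R s t)) (vlab R n mu) =
     [ffun s : bstring n => \sum_(lam <- Pplus l n | is_brh l n mu lam (n - r))
                  Omegabar R (skewd l n mu lam) * vlab R n lam s]).
Proof.
move=> l_le_n mu_P; have [t label_t] := label_surj l_le_n mu_P.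
have count_t : pcount (bit t) n = l by apply/eqP; rewrite -label_Pplus // label_t.
subst mu; split => r r_range; rewrite opapply_vlab; apply/ffunP => s; rewrite !ffunE.
  under eq_bigr do rewrite ffunE.
  by rewrite big_uniq_indicator ?uniq_Pplus // (A_entry _ _ l_le_n count_t).
under eq_bigr do rewrite ffunE.
rewrite big_uniq_indicator ?uniq_Pplus // (D_entry _ _ l_le_n count_t) //.
by case/orP: r_range => [/andP [_ ->] | /eqP ->].
Qed.
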